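(* Fix $\beta\in(0,1)$, $C_{\log}>0$, positive learning rates $\gamma^t_i,\gamma^{t+1}_i$ ($i\in[K]$), nonnegative loss-estimate vectors $\hat\ell^1,\dots,\hat\ell^t\in\mathbb{R}^K$, and a partition $[K]=U\cup V$ with $U\ne\emptyset$. With $p^t,p^{t+1},q^t,q^{t+1},\bar p^{t+1}$ as defined in the context, $$D^{t,t+1}(p^t,p^{t+1})-D^{t,t+1}_U(q^t,q^{t+1})\le D^{t,t+1}_V(p^t,\bar p^{t+1})+\Big(D^{t,t+1}_U(p^t,\bar p^{t+1})-D^{t,t+1}_U(q^t,q^{t+1})\Big)+D^{t+1}(\bar p^{t+1},p^{t+1}).$$
   Context: Regularizer: $\phi^s(x)=-C_{\log}\sum_{i\in[K]}\log x_i-\frac{1}{1-\beta}\sum_{i\in[K]}\gamma^s_ix_i^\beta$ for $s\in\{t,t+1\}$; for $\mathcal{I}\subseteq[K]$, $\phi^s_{\mathcal{I}}(x)=-C_{\log}\sum_{i\in\mathcal{I}}\log x_i-\frac{1}{1-\beta}\sum_{i\in\mathcal{I}}\gamma^s_ix_i^\beta$. Skewed Bregman divergences: $D^{s,r}(x,y)=\phi^s(x)-\phi^r(y)-\langle\nabla\phi^r(y),x-y\rangle$, $D^{s,r}_{\mathcal{I}}(x,y)=\phi^s_{\mathcal{I}}(x)-\phi^r_{\mathcal{I}}(y)-\langle\nabla\phi^r_{\mathcal{I}}(y),x-y\rangle$ (which only involves coordinates in $\mathcal{I}$), and $D^s=D^{s,s}$. $\Omega_K$ is the simplex, $\Omega_U=\{p\in\Omega_K:\sum_{i\in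 U}p_i=1\}$. Define $p^s=\arg\min_{p\in\Omega_K}\langle p,\sum_{\tau<s}\hat\ell^\tau\rangle+\phi^s(p)$ and $q^s=\arg\min_{p\in\Omega_U}\langle p,\sum_{\tau<s}\hat\ell^\tau\rangle+\phi^s(p)$ for $s\in\{t,t+1\}$. Define $\bar p^{t+1}=\bar p^{t+1}_U+\bar p^{t+1}_V$ where $\bar p^{t+1}_U=\arg\min\{\langle x,\sum_{\tau\le t}\hat\ell^\tau\rangle+\phi^{t+1}_U(x): x\in\mathbb{R}^K_{\ge0},\ \sum_{i\in V}x_i=0,\ \sum_{i\in U}x_i=\sum_{i\in U}p^t_i\}$ and $\bar p^{t+1}_V=\arg\min\{\langle x,\sum_{\tau\le t}\hat\ell^\tau\rangle+\phi^{t+1}_V(x): x\in\mathbb{R}^K_{\ge0},\ \sum_{i\in U}x_i=0,\ \sum_{i\in V}x_i=\sum_{i\in V}p^t_i\}$. *)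

From HB Require Import structures.
From mathcomp Require Import all_boot all_order all_algebra.
From mathcomp Require Import all_classical all_reals all_analysis.
Set Implicit Arguments. Unset Strict Implicit. Unset Printing Implicit Defensive.
Import Order.TTheory GRing.Theory Num.Theory.
Local Open Scope ring_scope.

Section Defs.
Variables (R : realType) (K : nat).
Implicit Types (x y : 'I_K -> R) (I : {set 'I_K}) (gam : 'I_K -> R).

Definition phiI (C beta : R) gam I x : R :=
  - C * (\sum_(i in I) ln (x i)) - (1 - beta)^-1 * (\sum_(i in I) gam i * x i `^ beta).

Definition dphi (C beta : R) gam (i : 'I_K) y : R :=
  - C / y i - (1 - beta)^-1 * (gam i * (beta * y i `^ (beta - 1))).

(* skewed Bregman divergence D^{s,r}_I(x,y); I = [set: 'I_K] gives D^{s,r} *)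
Definition BregI (C beta : R) (gs gr : 'I_K -> R) I x y : R :=
  phiI C beta gs I x - phiI C beta gr I y
  - \sum_(i in I) dphi C beta gr i y * (x i - y i).

Definition objI (C beta : R) gam I (L : 'I_K -> R) x : R :=
  \sum_i x i * L i + phiI C beta gam I x.

Definition is_argmin (S : ('I_K -> R) -> Prop) (f : ('I_K -> R) -> R) x :=
  S x /\ forall y, S y -> f x <= f y.

(* feasible set of the minimisation defining p^s : the simplex, intersected
   with the domain of the log-barrier (positive coordinates) *)
Definition simplex_dom x :=
  (forall i, 0 <= x i) /\ \sum_i x i = 1 /\ (forall i, 0 < x i).

(* Omega_U intersected with the domain of phi_U (positive on U) *)
Definition OmegaU_dom I x :=
  (forall i, 0 <= x i) /\ \sum_i x i = 1 /\ \sum_(i in I) x i = 1 /\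
  (forall i, i \in I -> 0 < x i).

(* feasible set for pbar_I : x >= 0, x vanishes (in sum) off I, prescribed
   mass m on I, and positive on I (domain of phi_I) *)
Definition restr_dom I (m : R) x :=
  (forall i, 0 <= x i) /\ \sum_(i in ~: I) x i = 0 /\ \sum_(i in I) x i = m /\
  (forall i, i \in I -> 0 < x i).

End Defs.

From mathcomp Require Import all_boot all_order all_algebra.
From mathcomp Require Import all_classical all_reals all_analysis.
From mathcomp Require Import ring lra.
Import numFieldNormedType.Exports.
Import Order.TTheory GRing.Theory Num.Theory.
Local Open Scope ring_scope.

(* The inequality is in fact an equality, in which the divergences between q^t
   and q^(t+1) cancel.  Write pb = pb_U + pb_V for \bar p^(t+1).  By the
   three-point identity for Bregman divergences,
     D(p^t, p^(t+1)) = D(p^t, pb) + D(pb, p^(t+1))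
                       + <grad phi(pb) - grad phi(p^(t+1)), p^t - pb>,
   and a divergence over [K] is the sum of its parts over U and V.  The
   direction d = p^t - pb has zero mass on U and on V, so it is admissible in
   the first-order conditions of p^(t+1) on the simplex and of pb_U, pb_V on
   their blocks; as pb coincides with pb_U on U and with pb_V on V, these
   conditions add up to <grad phi(pb) - grad phi(p^(t+1)), d> = 0.  Each
   first-order condition is Fermat's rule for s |-> objective(x + s d) at
   s = 0, available because the minimisers have positive coordinates. *)

Section line_derivatives.
Context {R : realType}.

Lemma is_derive_bigsum (I : Type) (r : seq I) (P : pred I) (h : I -> R -> R)
    (dh : I -> R) (t : R) :
  (forall i, P i -> is_derive t 1 (h i) (dh i)) ->
  is_derive t 1 (fun s => \sum_(i <- r | P i) h i s) (\sum_(i <- r | P i) dh i).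
Proof.
move=> hdh; rewrite -fct_sumE.
elim/big_rec2: _ => [|i df f Pi fdf]; first exact: is_derive_cst.
exact: is_deriveD (hdh _ Pi) fdf.
Qed.

Lemma is_derive_line (x d t : R) : is_derive t 1 (fun s => x + s * d) d.
Proof.
have -> : (fun s => x + s * d) = cst x + d \*: id.
  by apply/funext => s /=; rewrite mulrC.
have := is_deriveD (is_derive_cst x t 1) (is_deriveZ d (is_derive_id t 1)).
by rewrite add0r [_ *: _]mulr1.
Qed.

Lemma is_derive_along_line {g : R -> R} {x d t a : R} :
  is_derive (x + t * d) 1 g a -> is_derive t 1 (fun s => g (x + s * d)) (a * d).
Proof.
move=> dg.
have := @is_derive1_comp _ g (fun s => x + s * d) t a d dg (is_derive_line x d t).
by rewrite mulrC.
Qed.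

Lemma is_derive_local_min (f : R -> R) (c : R) :
  (\forall s \near c, derivable f s 1 /\ f c <= f s) -> is_derive c 1 f 0.
Proof.
move=> /nbhs_ballP [e /= e0 fe].
have in_ball s : s \in `]c - e, c + e[ -> ball c e s.
  rewrite in_itv /= => /andP [lt_s gt_s]; rewrite /ball /= ltr_norml.
  by apply/andP; split; lra.
apply: (@derive1_at_min _ f (c - e) (c + e)).
- by rewrite lerD2l ge0_cp // ltW.
- by move=> s /in_ball /fe [].
- by rewrite in_itv /= ltrDl e0 gtrDl oppr_lt0 e0.
- by move=> s /in_ball /fe [].
Qed.

Lemma near0_line_gt0 (x d : R) : 0 < x -> \forall s \near (0 : R), 0 < x + s * d.
Proof.
move=> x0; apply: (@cvgr_gt _ _ (nbhs (0 : R)) _ (fun s => x + s * d) x _ 0 x0).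
rewrite -[X in (_ --> X)%classic]addr0 -[X in (_ --> _ + X)%classic](mul0r d).
apply: cvgD; first exact: cvg_cst.
by apply: cvgMr_tmp; exact: cvg_id.
Qed.

End line_derivatives.

Section set_splitting.
Context {R : realType} {T : finType}.

Lemma setC_of_partition {U V : {set T}} :
  U :|: V = [set: T] -> [disjoint U & V] -> V = ~: U.
Proof.
move=> UV_T UV_disj.
rewrite -finset.setTD -UV_T finset.setDUl finset.setDv finset.set0U.
by apply/esym/finset.setDidPl; rewrite disjoint_sym.
Qed.

Lemma sumr_setC_split (U : {set T}) (F : T -> R) :
  \sum_i F i = \sum_(i in U) F i + \sum_(i in ~: U) F i.
Proof.
by rewrite (bigID (mem U)) /=; congr (_ + _); apply: eq_bigl => i; rewrite !inE.
Qed.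

End set_splitting.

Section first_order_conditions.
Variables (R : realType) (K : nat) (C beta : R) (gam : 'I_K -> R).
Implicit Types (x d L : 'I_K -> R) (I : {set 'I_K}).

Lemma objI_is_derive_line I L x d t :
  (forall i, i \in I -> 0 < x i + t * d i) ->
  is_derive t 1 (fun s => objI C beta gam I L (fun i => x i + s * d i))
    (\sum_i d i * L i + \sum_(i in I) dphi C beta gam i (fun i => x i + t * d i) * d i).
Proof.
move=> xtd_gt0.
have dlin : is_derive t 1 (fun s => \sum_i (x i + s * d i) * L i) (\sum_i d i * L i).
  apply: is_derive_bigsum => i _.
  have -> : (fun s => (x i + s * d i) * L i) = (fun s => x i * L i + s * (d i * L i)).
    by apply/funext => s; ring.
  exact: is_derive_line.
have dln : is_derive t 1 (fun s => \sum_(i in I) ln (x i + s * d i))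
    (\sum_(i in I) (x i + t * d i)^-1 * d i).
  apply: is_derive_bigsum => i iI; apply: is_derive_along_line.
  exact: is_derive1_ln (xtd_gt0 i iI).
have dpow : is_derive t 1 (fun s => \sum_(i in I) gam i * (x i + s * d i) `^ beta)
    (\sum_(i in I) gam i * (beta * (x i + t * d i) `^ (beta - 1) * d i)).
  apply: is_derive_bigsum => i iI.
  have dpow_i := is_derive_along_line (is_derive1_powR beta (xtd_gt0 i iI)).
  by have := is_deriveZ (gam i) dpow_i.
have dobj := is_deriveD dlin
  (is_deriveB (is_deriveZ (- C) dln) (is_deriveZ ((1 - beta)^-1) dpow)).
apply: is_derive_eq dobj _.
rewrite /dphi /GRing.scale /= !mulr_sumr -sumrB.
by congr (_ + _); apply: eq_bigr => i _; ring.
Qed.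

Lemma near0_line_gt0_on {I x} d : (forall i, i \in I -> 0 < x i) ->
  \forall s \near (0 : R), forall i, i \in I -> 0 < x i + s * d i.
Proof.
move=> x_gt0.
apply: (@filter_forall _ _ (fun i s => i \in I -> 0 < x i + s * d i) (nbhs (0 : R)) _).
move=> i.
case: (boolP (i \in I)) => iI; last by apply: nearW.
by near=> s => _; near: s; exact: near0_line_gt0 (x_gt0 i iI).
Unshelve. all: by end_near.
Qed.

Lemma argmin_line_stationary {I L S x} d :
  is_argmin S (objI C beta gam I L) x -> (forall i, i \in I -> 0 < x i) ->
  (\forall s \near (0 : R), S (fun i => x i + s * d i)) ->
  \sum_i d i * L i + \sum_(i in I) dphi C beta gam i x * d i = 0.
Proof.
move=> [_ xmin] x_gt0 Sline.
have line0 : (fun i => x i + 0 * d i) = x by apply/funext => i; rewrite mul0r addr0.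
have line_gt0 := near0_line_gt0_on d x_gt0.
have := objI_is_derive_line I L x d 0 (nbhs_singleton line_gt0).
rewrite line0 => -[_ <-].
apply: derive_val; apply: is_derive_local_min.
near=> s; split.
  by apply: ex_derive; apply: objI_is_derive_line; near: s.
by rewrite line0; apply: xmin; near: s.
Unshelve. all: by end_near.
Qed.

Lemma simplex_argmin_stationary {L x} d :
  is_argmin (@simplex_dom R K) (objI C beta gam [set: 'I_K] L) x -> \sum_i d i = 0 ->
  \sum_i (L i + dphi C beta gam i x) * d i = 0.
Proof.
move=> xmin sd; have [[_ [sx x_gt0]] _] := xmin.
have x_gt0T i : i \in [set: 'I_K] -> 0 < x i by move=> _; exact: x_gt0.
have line_gt0 := near0_line_gt0_on d x_gt0T.
have line_feasible : \forall s \near (0 : R), simplex_dom (fun i => x i + s * d i).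
  move: line_gt0; apply: filterS => s xsd_gt0.
  split; last split; first by move=> i; apply/ltW/xsd_gt0.
    by rewrite big_split /= -mulr_sumr sd mulr0 addr0 sx.
  by move=> i; apply: xsd_gt0.
have := argmin_line_stationary d xmin x_gt0T line_feasible.
rewrite (eq_bigl _ _ (fun i => finset.in_setT i)) -big_split /= => stat.
by rewrite -[RHS]stat; apply: eq_bigr => i _; ring.
Qed.

Lemma restr_dom_eq0 {I m x} : restr_dom I m x -> forall i, i \notin I -> x i = 0.
Proof.
move=> [x_ge0 [sx0 _]] i iI.
by apply: (psumr_eq0P _ sx0) => [j _|]; rewrite ?finset.in_setC.
Qed.

Lemma restr_argmin_stationary {I m L x} d :
  is_argmin (restr_dom I m) (objI C beta gam I L) x -> \sum_(i in I) d i = 0 ->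
  \sum_(i in I) (L i + dphi C beta gam i x) * d i = 0.
Proof.
move=> xmin sd; have [[x_ge0 [sx0 [sxm x_gt0]]] _] := xmin.
pose dI i := if i \in I then d i else 0.
have sdI : \sum_(i in I) dI i = 0.
  by rewrite -[RHS]sd; apply: eq_bigr => i iI; rewrite /dI iI.
have line_feasible : \forall s \near (0 : R), restr_dom I m (fun i => x i + s * dI i).
  move: (near0_line_gt0_on dI x_gt0); apply: filterS => s xsd_gt0.
  split; last split; last split.
  - move=> i; case: (boolP (i \in I)) => iI; first exact/ltW/xsd_gt0.
    by rewrite /dI (negbTE iI) mulr0 addr0.
  - rewrite big_split /= sx0 add0r big1 ?mulr0 // => i.
    by rewrite finset.in_setC /dI => /negbTE ->; rewrite mulr0.
  - by rewrite big_split /= -mulr_sumr sdI mulr0 addr0 sxm.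
  - exact: xsd_gt0.
have := argmin_line_stationary dI xmin x_gt0 line_feasible.
have -> : \sum_i dI i * L i = \sum_(i in I) d i * L i.
  rewrite [RHS]big_mkcond; apply: eq_bigr => i _.
  by rewrite /dI; case: ifP; rewrite ?mul0r.
rewrite -big_split /= => stat.
by rewrite -[RHS]stat; apply: eq_bigr => i iI; rewrite /dI iI; ring.
Qed.

Lemma blockwise_argmin_cross_eq0 U L x p xU xV :
  is_argmin (@simplex_dom R K) (objI C beta gam [set: 'I_K] L) p ->
  is_argmin (restr_dom U (\sum_(i in U) x i)) (objI C beta gam U L) xU ->
  is_argmin (restr_dom (~: U) (\sum_(i in ~: U) x i)) (objI C beta gam (~: U) L) xV ->
  let xb := fun i => xU i + xV i in
  \sum_(i in [set: 'I_K]) (dphi C beta gam i xb - dphi C beta gam i p) * (x i - xb i) = 0.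
Proof.
move=> p_min xU_min xV_min xb.
have xU_off i : i \in ~: U -> xU i = 0.
  by rewrite finset.in_setC; exact: restr_dom_eq0 (proj1 xU_min) i.
have xV_off i : i \in U -> xV i = 0.
  by move=> iU; apply: (restr_dom_eq0 (proj1 xV_min) i); rewrite finset.in_setC iU.
pose d i := x i - xb i.
have dU : \sum_(i in U) d i = 0.
  have [[_ [_ [xU_mass _]]] _] := xU_min.
  by rewrite sumrB big_split /= xU_mass (big1 _ _ _ xV_off) addr0 subrr.
have dV : \sum_(i in ~: U) d i = 0.
  have [[_ [_ [xV_mass _]]] _] := xV_min.
  by rewrite sumrB big_split /= xV_mass (big1 _ _ _ xU_off) add0r subrr.
have statU : \sum_(i in U) (L i + dphi C beta gam i xb) * d i = 0.
  rewrite -[RHS](restr_argmin_stationary d xU_min dU).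
  by apply: eq_bigr => i iU; rewrite /dphi /xb xV_off ?addr0.
have statV : \sum_(i in ~: U) (L i + dphi C beta gam i xb) * d i = 0.
  rewrite -[RHS](restr_argmin_stationary d xV_min dV).
  by apply: eq_bigr => i iV; rewrite /dphi /xb xU_off ?add0r.
have d_sum : \sum_i d i = 0 by rewrite (sumr_setC_split U) dU dV addr0.
rewrite (eq_bigl _ _ (fun i => finset.in_setT i)).
have -> : \sum_i (dphi C beta gam i xb - dphi C beta gam i p) * d i =
    \sum_i (L i + dphi C beta gam i xb) * d i - \sum_i (L i + dphi C beta gam i p) * d i.
  by rewrite -sumrB; apply: eq_bigr => i _; ring.
rewrite (simplex_argmin_stationary d p_min d_sum) subr0.
by rewrite (sumr_setC_split U) statU statV addr0.
Qed.

End first_order_conditions.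

Arguments blockwise_argmin_cross_eq0 {R K C beta gam U L x p xU xV}.

Section bregman_identities.
Context {R : realType} {K : nat} (C beta : R).
Implicit Types (x y z : 'I_K -> R) (gs gr : 'I_K -> R) (I : {set 'I_K}).

Lemma BregI_three_point gs gr I x y z :
  BregI C beta gs gr I x z = BregI C beta gs gr I x y + BregI C beta gr gr I y z
    + \sum_(i in I) (dphi C beta gr i y - dphi C beta gr i z) * (x i - y i).
Proof.
rewrite /BregI.
have -> : \sum_(i in I) dphi C beta gr i z * (x i - z i) =
    \sum_(i in I) dphi C beta gr i z * (y i - z i)
    + \sum_(i in I) dphi C beta gr i z * (x i - y i).
  by rewrite -big_split; apply: eq_bigr => i _ /=; ring.
have -> : \sum_(i in I) (dphi C beta gr i y - dphi C beta gr i z) * (x i - y i) =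
    \sum_(i in I) dphi C beta gr i y * (x i - y i)
    - \sum_(i in I) dphi C beta gr i z * (x i - y i).
  by rewrite -sumrB; apply: eq_bigr => i _; ring.
ring.
Qed.

Lemma BregI_setT_split gs gr U x y :
  BregI C beta gs gr [set: 'I_K] x y
  = BregI C beta gs gr U x y + BregI C beta gs gr (~: U) x y.
Proof.
rewrite /BregI /phiI !(big_setID (A := [set: 'I_K]) U) finset.setTI finset.setTD /=.
ring.
Qed.

End bregman_identities.

Theorem lemma1 (R : realType) (K t : nat) (beta C : R)
  (g0 g1 : 'I_K -> R) (lhat : nat -> 'I_K -> R)
  (U V : {set 'I_K})
  (p0 p1 q0 q1 pbU pbV : 'I_K -> R) :
  0 < beta -> beta < 1 -> 0 < C ->
  (forall i, 0 < g0 i) -> (forall i, 0 < g1 i) ->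
  (1 <= t)%N ->
  (forall tau i, (1 <= tau <= t)%N -> 0 <= lhat tau i) ->
  U :|: V = [set: 'I_K] -> [disjoint U & V] -> U != finset.set0 ->
  let L0 := fun i => \sum_(1 <= tau < t) lhat tau i in
  let L1 := fun i => \sum_(1 <= tau < t.+1) lhat tau i in
  is_argmin (@simplex_dom R K) (objI C beta g0 [set: 'I_K] L0) p0 ->
  is_argmin (@simplex_dom R K) (objI C beta g1 [set: 'I_K] L1) p1 ->
  is_argmin (OmegaU_dom U) (objI C beta g0 U L0) q0 ->
  is_argmin (OmegaU_dom U) (objI C beta g1 U L1) q1 ->
  is_argmin (restr_dom U (\sum_(i in U) p0 i)) (objI C beta g1 U L1) pbU ->
  is_argmin (restr_dom V (\sum_(i in V) p0 i)) (objI C beta g1 V L1) pbV ->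
  let pb := fun i => pbU i + pbV i in
  BregI C beta g0 g1 [set: 'I_K] p0 p1 - BregI C beta g0 g1 U q0 q1
  <= BregI C beta g0 g1 V p0 pb
     + (BregI C beta g0 g1 U p0 pb - BregI C beta g0 g1 U q0 q1)
     + BregI C beta g1 g1 [set: 'I_K] pb p1.
Proof.
move=> _ _ _ _ _ _ _ UV_T UV_disj _ L0 L1 _ p1_min _ _ pbU_min pbV_min; cbv zeta.
rewrite (setC_of_partition UV_T UV_disj) in pbV_min *.
rewrite (BregI_three_point C beta g0 g1 _ p0 (fun i => pbU i + pbV i) p1).
rewrite (blockwise_argmin_cross_eq0 p1_min pbU_min pbV_min) addr0.
rewrite (BregI_setT_split C beta _ _ U).
lra.
Qed.
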